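(* Let $g\in\mathbb Y$ and let $\hat x_\alpha\in R_\alpha(g)$, $\alpha>0$, be any selection. Define $\vartheta_g:(0,\infty)\to\mathbb R$ by $\vartheta_g(\alpha):=\inf_{x\in\mathrm{dom}(\mathcal R)}T_\alpha(x,g)=\frac1{2\alpha}\|g-A\hat x_\alpha\|^2_{\mathbb Y}+\mathcal R(\hat x_\alpha)$. Then $\vartheta_g$ is convex, non-increasing and continuously differentiable with $$\vartheta_g'(\alpha)=-\frac1{2\alpha^2}\|g-A\hat x_\alpha\|_{\mathbb Y}^2\quad\text{for all }\alpha>0.$$
   Context: Standing setting: $\mathbb X$ real Banach space, $\tau$ a topology with $(\mathbb X,\tau)$ locally convex Hausdorff; $\mathcal R:\mathbb X\to(-\infty,\infty]$ proper convex with $\tau$-compact sublevel sets $\{\mathcal R\le\lambda\}$; $\mathbb Y$ real Hilbert space; $A:\mathbb X\to\mathbb Y$ linear, $\tau$-to-weak continuous. $T_\alpha(x,g):=\frac1{2\alpha}\|g-Ax\|_{\mathbb Y}^2+\mathcal R(x)$, $R_\alpha(g):=\operatorname{argmin}_{x\in\mathrm{dom}(\mathcal R)}T_\alpha(x,g)$ (nonempty). *)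

From HB Require Import structures.
From mathcomp Require Import all_boot all_order all_algebra.
From mathcomp Require Import all_classical all_reals all_analysis.
Set Implicit Arguments. Unset Strict Implicit. Unset Printing Implicit Defensive.
Import Order.TTheory GRing.Theory Num.Theory.
Import numFieldNormedType.Exports.
Local Open Scope classical_set_scope.
Local Open Scope ring_scope.

(* An inner product on a real normed space Y inducing its norm:
   (Y, ip) is then a real Hilbert space when Y is complete. *)
Definition is_inner_product (R : realType) (Y : normedModType R)
    (ip : Y -> Y -> R) : Prop :=
  [/\ forall a u v w, ip (a *: u + v) w = a * ip u w + ip v w,
      forall u v, ip u v = ip v u
    & forall u, ip u u = `|u| ^+ 2].

Definition edom (R : realType) (X : Type) (Rf : X -> \bar R) : set X :=
  [set x | (Rf x < +oo)%E].

Definition econvex (R : realType) (X : lmodType R) (Rf : X -> \bar R) : Prop :=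
  forall (x y : X) (t : R), 0 <= t <= 1 ->
    (Rf (t *: x + (1 - t) *: y)%R <= t%:E * Rf x + (1 - t)%:E * Rf y)%E.

Definition Tik (R : realType) (X : lmodType R) (Y : normedModType R)
    (A : X -> Y) (Rf : X -> \bar R) (alpha : R) (x : X) (g : Y) : \bar R :=
  ((2 * alpha)^-1 * `|g - A x| ^+ 2)%:E + Rf x.

Definition Ralpha (R : realType) (X : lmodType R) (Y : normedModType R)
    (A : X -> Y) (Rf : X -> \bar R) (alpha : R) (g : Y) : set X :=
  [set x | edom Rf x /\
           forall z, edom Rf z -> (Tik A Rf alpha x g <= Tik A Rf alpha z g)%E].

Definition vartheta (R : realType) (X : lmodType R) (Y : normedModType R)
    (A : X -> Y) (Rf : X -> \bar R) (g : Y) (alpha : R) : R :=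
  fine (ereal_inf [set Tik A Rf alpha x g | x in edom Rf]).

From HB Require Import structures.
From mathcomp Require Import all_boot all_order all_algebra.
From mathcomp Require Import all_classical all_reals all_analysis.
From mathcomp Require Import lra ring.
Import Order.TTheory GRing.Theory Num.Theory.
Import numFieldNormedType.Exports.
Local Open Scope classical_set_scope.
Local Open Scope ring_scope.

(* The proof only uses that x_a minimizes the convex functional T_a(., g);
   existence of minimizers (where the compactness and continuity hypotheses
   enter) is given by the selection.  Writing P(a) = |g - A x_a| / a:
   1. comparing x_a with the segment towards any y in dom R yields the
      Euler-Lagrange inequality of x_a (minimizer_variational_ineq);
   2. testing it with y = x_b and using Cauchy-Schwarz shows that theta
      has at every a > 0 the supporting line of slope s(a) = -P(a)^2 / 2
      (vartheta_support), and adding the two inequalities at a and b bounds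
      b |P(b) - P(a)| by |b - a| P(a), so P and s are continuous;
   3. a real function with supporting lines of continuously varying slope s
      is convex, non-increasing when s <= 0, and differentiable with
      derivative s, hence C^1 (section SupportingLines). *)

Lemma nonneg_of_perturbation (R : realType) (d W : R) : 0 <= W ->
  (forall t, 0 < t <= 1 -> 0 <= d + t * W) -> 0 <= d.
Proof.
move=> W0 pert; rewrite leNgt; apply/negP => d0.
set t := - d / (2 * (W - d)).
have tW : t * (2 * (W - d)) = - d by rewrite /t mulfVK // mulf_neq0 // ?gt_eqF //; lra.
have t0 : 0 < t by rewrite /t divr_gt0 //; lra.
have := pert t; rewrite t0 /= => /(_ ltac:(nra)); nra.
Qed.

Lemma continuous_at_of_local_lipschitz (R : realType) (F : R -> R) a K d :
  0 <= K -> 0 < d ->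
  (forall b, `|b - a| < d -> `|F b - F a| <= K * `|b - a|) ->
  {for a, continuous F}.
Proof.
move=> K0 d0 lipF; apply/cvgrPdist_le => eps e0.
have K1 : 0 < K + 1 by lra.
near=> b.
have : ball a (Num.min d (eps / (K + 1))) b.
  by near: b; exists (Num.min d (eps / (K + 1))); rewrite //= lt_min d0 divr_gt0.
rewrite /ball /= lt_min distrC => /andP[bd be].
rewrite distrC; apply: le_trans (lipF b bd) _.
have : `|b - a| * (K + 1) <= eps by rewrite -ler_pdivlMr // ltW.
have := normr_ge0 (b - a); nra.
Unshelve. all: by end_near.
Qed.

Section SupportingLines.
Context {R : realType} {theta s : R -> R}.
Hypothesis support :
  forall {a b}, 0 < a -> 0 < b -> s a * (b - a) <= theta b - theta a.

Lemma support_convex a b t : 0 < a -> 0 < b -> 0 <= t <= 1 ->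
  theta (t * a + (1 - t) * b) <= t * theta a + (1 - t) * theta b.
Proof.
move=> a0 b0 /andP[t0 t1].
have c0 : 0 < t * a + (1 - t) * b.
  have [->|tn0] := eqVneq t 0; first by rewrite mul0r add0r subr0 mul1r.
  have tp : 0 < t by rewrite lt_neqAle eq_sym tn0.
  by rewrite ltr_pwDl ?mulr_gt0 ?mulr_ge0 ?subr_ge0 // ltW.
set c := t * a + (1 - t) * b in c0 *.
have t1' : 0 <= 1 - t by lra.
have ha := ler_wpM2l t0 (support c0 a0).
have hb := ler_wpM2l t1' (support c0 b0).
have balance : t * (s c * (a - c)) + (1 - t) * (s c * (b - c)) = 0.
  by rewrite /c; ring.
lra.
Qed.

Lemma support_nonincreasing : (forall c, 0 < c -> s c <= 0) ->
  forall a b, 0 < a -> a <= b -> theta b <= theta a.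
Proof.
move=> s_nonpos a b a0 ab; have b0 : 0 < b by lra.
have := support b0 a0; have := s_nonpos b b0; nra.
Qed.

(* difference quotients of theta are squeezed between the two slopes *)
Lemma support_slope_bound {a b} : 0 < a -> 0 < b -> b != a ->
  `|(theta b - theta a) / (b - a) - s a| <= `|s b - s a|.
Proof.
move=> a0 b0 ba; set q := (theta b - theta a) / (b - a).
have hq : theta b - theta a = q * (b - a) by rewrite /q divfK // subr_eq0.
have lo := support a0 b0; have hi := support b0 a0.
rewrite -(opprB (theta b)) hq in hi; rewrite hq in lo.
have [ab|] := ltP a b.
  have [sq qs] : s a <= q /\ q <= s b by split; nra.
  by rewrite !ger0_norm; lra.
rewrite le_eqVlt (negbTE ba) /= => ba'.
have [qs sq] : q <= s a /\ s b <= q by split; nra.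
by rewrite !ler0_norm; lra.
Qed.

Lemma support_derive_cvg {a} : 0 < a -> {for a, continuous s} ->
  (fun h => h^-1 *: (theta (h + a) - theta a)) @ 0^' --> s a.
Proof.
move=> a0 sa; apply/cvgrPdist_le => eps e0.
have /nbhs_ballP[d d0 sd] : \forall b \near a, `|s a - s b| <= eps.
  by move/cvgrPdist_le : sa; apply.
near=> h.
have hn0 : h != 0 by near: h; exact: nbhs_dnbhs_neq.
have : `|h| < Num.min a d by near: h; apply: dnbhs0_lt; rewrite lt_min a0 d0.
rewrite lt_min => /andP[ha hd].
have b0 : 0 < h + a by move: ha; rewrite ltr_norml; lra.
have ba : h + a != a by rewrite -subr_eq0 addrK.
have := support_slope_bound a0 b0 ba; rewrite addrK mulrC distrC.
move=> /le_trans; apply; rewrite distrC; apply: sd.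
by rewrite /ball /= opprD addrCA subrr addr0 normrN.
Unshelve. all: by end_near.
Qed.

Lemma support_derive {a} : 0 < a -> {for a, continuous s} ->
  derivable theta a 1 /\ derive1 theta a = s a.
Proof.
move=> a0 sa; have D := support_derive_cvg a0 sa.
split; last by rewrite /derive1; exact: cvg_lim.
rewrite /derivable; set q := fun h => h^-1 *: _.
suff -> : q = (fun h => h^-1 *: (theta (h + a) - theta a)) by exact: cvgP D.
by apply/funext => h; rewrite /q [_%:A]mulr1.
Qed.

(* theta' = s on (0, oo), so theta' inherits the continuity of s *)
Lemma support_derive_continuous a : 0 < a ->
  (forall b, 0 < b -> {for b, continuous s}) -> {for a, continuous (derive1 theta)}.
Proof.
move=> a0 sc; have sa := sc a a0.
rewrite /prop_for /continuous_at (support_derive a0 sa).2.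
apply: cvg_trans sa; apply: near_eq_cvg.
near=> b; have b0 : 0 < b.
  by near: b; exact: lt_nbhsr.
by rewrite (support_derive b0 (sc b b0)).2.
Unshelve. all: by end_near.
Qed.
End SupportingLines.

Section InnerProduct.
Context {R : realType} {Y : normedModType R} {ip : Y -> Y -> R}.
Hypothesis ip_inner : is_inner_product ip.

Lemma ip0 w : ip 0 w = 0.
Proof.
case: ip_inner => lin _ _; have := lin 1 0 0 w.
by rewrite scale1r addr0 mul1r => h; apply: (addrI (ip 0 w)); rewrite addr0 -h.
Qed.

Lemma ipD u v w : ip (u + v) w = ip u w + ip v w.
Proof. by case: ip_inner => lin _ _; have := lin 1 u v w; rewrite scale1r mul1r. Qed.

Lemma ipZ t u w : ip (t *: u) w = t * ip u w.
Proof. by case: ip_inner => lin _ _; have := lin t u 0 w; rewrite !addr0 ip0 addr0. Qed.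

Lemma ipC u w : ip u w = ip w u.
Proof. by case: ip_inner. Qed.

Lemma ip_norm u : ip u u = `|u| ^+ 2.
Proof. by case: ip_inner. Qed.

Lemma ipDr u v w : ip w (u + v) = ip w u + ip w v.
Proof. by rewrite ipC ipD !(ipC w). Qed.

Lemma ipZr t u w : ip w (t *: u) = t * ip w u.
Proof. by rewrite ipC ipZ ipC. Qed.

Lemma ipBr u v w : ip w (u - v) = ip w u - ip w v.
Proof. by rewrite -scaleN1r ipDr ipZr mulN1r. Qed.

Lemma norm_sqr_line u t w :
  `|u + t *: w| ^+ 2 = `|u| ^+ 2 + 2 * t * ip u w + t ^+ 2 * `|w| ^+ 2.
Proof. by rewrite -!ip_norm !ipD !ipZ !ipDr !ipZr (ipC w u); ring. Qed.

Lemma cauchy_schwarz u w : ip u w <= `|u| * `|w|.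
Proof.
have := norm_sqr_line u 1 w; rewrite scale1r => expand.
have : `|u + w| ^+ 2 <= (`|u| + `|w|) ^+ 2.
  by rewrite ler_sqr ?nnegrE ?addr_ge0 // ler_normD.
nra.
Qed.
End InnerProduct.

Section Tikhonov.
Context {R : realType} {X : lmodType R} {Y : normedModType R}.
Context {ip : Y -> Y -> R} {A : {linear X -> Y}} {Rf : X -> \bar R} {g : Y}.
Hypotheses (ip_inner : is_inner_product ip)
  (Rf_noninf : forall x, Rf x != -oo%E) (Rf_convex : econvex Rf).

Lemma edom_fin {x} : edom Rf x -> Rf x = (fine (Rf x))%:E.
Proof. by move=> dx; rewrite fineK // fin_numE Rf_noninf (lt_eqF dx). Qed.

Lemma residual_segment (x y : X) t :
  g - A (t *: y + (1 - t) *: x) = (g - A x) + t *: ((g - A y) - (g - A x)).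
Proof.
have -> : (g - A y) - (g - A x) = A x - A y by rewrite opprB addrC addrA subrK.
rewrite linearD !linearZ /= scalerBl scale1r !scalerBr -!addrA; congr (g + _).
by rewrite addrCA opprD opprB addrC.
Qed.

(* Euler-Lagrange inequality of a minimizer x of T_a(., g), obtained by
   comparing x with the points of the segment from x to y *)
Lemma minimizer_variational_ineq {a x y} : 0 < a -> Ralpha A Rf a g x -> edom Rf y ->
  0 <= ip (g - A x) ((g - A y) - (g - A x)) / a + fine (Rf y) - fine (Rf x).
Proof.
move=> a0 [dx xmin] dy.
set u := g - A x; set v := g - A y; set rx := fine (Rf x); set ry := fine (Rf y).
set c := ip u (v - u).
apply: (@nonneg_of_perturbation _ _ (`|v - u| ^+ 2 / (2 * a))).
  by rewrite divr_ge0 ?sqr_ge0 //; lra.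
move=> t /andP[t0 t1]; set z := t *: y + (1 - t) *: x.
have Rz : (Rf z <= (t * ry + (1 - t) * rx)%:E)%E.
  have := Rf_convex y x t; rewrite (ltW t0) t1 => /(_ isT).
  by rewrite (edom_fin dy) (edom_fin dx) -!EFinM -EFinD.
have dz : edom Rf z by apply: le_lt_trans Rz _; exact: ltry.
have := xmin z dz; rewrite /Tik (edom_fin dx) (edom_fin dz) -!EFinD !lee_fin.
rewrite residual_segment -/u -/v (norm_sqr_line ip_inner) -/c -/rx.
move: Rz; rewrite (edom_fin dz) lee_fin; set rz := fine (Rf z) => Rz cmp.
have ia : 0 < a^-1 by rewrite invr_gt0.
have half : (2 * a)^-1 = a^-1 / 2 by rewrite invfM mulrC.
rewrite half /= in cmp; rewrite [c / a]mulrC [_ / (2 * a)]mulrC half.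
have : 0 <= t * (a^-1 * c + ry - rx + t * (a^-1 / 2 * `|v - u| ^+ 2)) by nra.
by rewrite pmulr_rge0.
Qed.

Lemma vartheta_minimizer {a x} : Ralpha A Rf a g x ->
  (vartheta A Rf g a)%:E = Tik A Rf a x g.
Proof.
move=> [dx xmin]; rewrite /vartheta.
have -> : ereal_inf [set Tik A Rf a z g | z in edom Rf] = Tik A Rf a x g.
  apply/le_anti/andP; split; first by apply: ereal_inf_lbound; exists x.
  by apply/ereal_infP => _ [z dz <-]; exact: xmin.
by rewrite /Tik (edom_fin dx) -EFinD.
Qed.

Context {xhat : R -> X}.
Hypothesis xhat_sel : forall {a}, 0 < a -> Ralpha A Rf a g (xhat a).

Definition res_scaled a := `|g - A (xhat a)| / a.
Definition reg_value a := fine (Rf (xhat a)).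
Definition res_cross a b := ip (g - A (xhat a)) (g - A (xhat b)) / (a * b).

Lemma res_scaled_ge0 {a} : 0 < a -> 0 <= res_scaled a.
Proof. by move=> a0; rewrite divr_ge0 // ltW. Qed.

Lemma vartheta_selection a : 0 < a ->
  vartheta A Rf g a = a * res_scaled a ^+ 2 / 2 + reg_value a.
Proof.
move=> a0; have [dx _] := xhat_sel a0.
have := vartheta_minimizer (xhat_sel a0); rewrite /Tik (edom_fin dx) -EFinD.
by case=> ->; congr (_ + _); rewrite /res_scaled; field; rewrite gt_eqF.
Qed.

Lemma res_cross_le {a b} : 0 < a -> 0 < b -> res_cross a b <= res_scaled a * res_scaled b.
Proof.
move=> a0 b0; rewrite /res_cross /res_scaled.
by rewrite mulf_div ler_pM2r ?invr_gt0 ?mulr_gt0 // (cauchy_schwarz ip_inner).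
Qed.

Lemma res_crossC a b : res_cross b a = res_cross a b.
Proof. by rewrite /res_cross (ipC ip_inner) (mulrC b a). Qed.

(* the variational inequality at x_a tested with y = x_b *)
Lemma selection_variational_ineq {a b} : 0 < a -> 0 < b ->
  0 <= b * res_cross a b - a * res_scaled a ^+ 2 + reg_value b - reg_value a.
Proof.
move=> a0 b0; have [dxb _] := xhat_sel b0.
have := minimizer_variational_ineq a0 (xhat_sel a0) dxb.
rewrite (ipBr ip_inner) (ip_norm ip_inner) /res_cross /res_scaled /reg_value.
have -> : (ip (g - A (xhat a)) (g - A (xhat b)) - `|g - A (xhat a)| ^+ 2) / a =
          b * (ip (g - A (xhat a)) (g - A (xhat b)) / (a * b))
          - a * (`|g - A (xhat a)| / a) ^+ 2.
  by field; rewrite !gt_eqF.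
by [].
Qed.

Lemma vartheta_support a b : 0 < a -> 0 < b ->
  - (res_scaled a ^+ 2 / 2) * (b - a) <= vartheta A Rf g b - vartheta A Rf g a.
Proof.
move=> a0 b0; rewrite !vartheta_selection //.
have := res_cross_le a0 b0; have := selection_variational_ineq a0 b0.
set P := res_scaled a; set Q := res_scaled b; set k := res_cross a b.
move=> vi kPQ.
have h1 : 0 <= b * (P - Q) ^+ 2 by rewrite mulr_ge0 ?sqr_ge0 // ltW.
have h2 : b * k <= b * (P * Q) by rewrite ler_pM2l.
have e : b * (P - Q) ^+ 2 = b * P ^+ 2 - 2 * (b * (P * Q)) + b * Q ^+ 2 by ring.
lra.
Qed.

(* adding the variational inequalities at x_a and x_b bounds the variation
   of the scaled residual *)
Lemma res_scaled_lipschitz {a b} : 0 < a -> 0 < b ->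
  b * `|res_scaled b - res_scaled a| <= `|b - a| * res_scaled a.
Proof.
move=> a0 b0; have := res_cross_le a0 b0.
have := selection_variational_ineq a0 b0; have := selection_variational_ineq b0 a0.
have := res_scaled_ge0 a0; have := res_scaled_ge0 b0.
rewrite res_crossC; set P := res_scaled a; set Q := res_scaled b; set k := res_cross a b.
move=> Q0 P0 vib via kPQ; clearbody P Q k.
have h2 : (a + b) * k <= (a + b) * (P * Q) by rewrite ler_pM2l; lra.
have sq : b * `|Q - P| ^+ 2 <= (b - a) * P * (P - Q).
  rewrite real_normK ?num_real //.
  have e : b * (Q - P) ^+ 2 - (b - a) * P * (P - Q) =
           a * P ^+ 2 + b * Q ^+ 2 - (a + b) * (P * Q) by ring.
  lra.
have lin : (b - a) * P * (P - Q) <= `|b - a| * P * `|Q - P|.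
  apply: le_trans (ler_norm _) _.
  by rewrite !normrM (ger0_norm P0) (distrC P Q).
have [->|QP] := eqVneq Q P; first by rewrite subrr normr0 mulr0 mulr_ge0.
have hp : 0 < `|Q - P| by rewrite normr_gt0 subr_eq0.
by have := le_trans sq lin; rewrite expr2 mulrA ler_pM2r.
Qed.

(* for b > a / 2 the Lipschitz bound gives |P b - P a| <= 2 P(a) / a * |b - a| *)
Lemma res_scaled_continuous a : 0 < a -> {for a, continuous res_scaled}.
Proof.
move=> a0; apply: (@continuous_at_of_local_lipschitz _ _ _ (2 * res_scaled a / a) (a / 2)).
- by apply: divr_ge0; [apply: mulr_ge0 => //; exact: res_scaled_ge0 | exact: ltW].
- by rewrite divr_gt0.
move=> b; rewrite ltr_norml => /andP[ba _]; have b0 : 0 < b by lra.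
have := res_scaled_lipschitz a0 b0; have := normr_ge0 (b - a).
have := normr_ge0 (res_scaled b - res_scaled a); have := res_scaled_ge0 a0.
move=> P0 n1 n2 lip.
rewrite -(ler_pM2l b0); apply: le_trans lip _.
have -> : b * (2 * res_scaled a / a * `|b - a|) = (2 * b / a) * (`|b - a| * res_scaled a).
  by field; rewrite gt_eqF.
have ratio : 1 <= 2 * b / a by rewrite ler_pdivlMr // mul1r; lra.
have := mulr_ge0 n2 P0; nra.
Qed.
End Tikhonov.

Theorem proposition5p3
  (R : realType)
  (* X : real Banach space *)
  (X : completeNormedModType R)
  (* tau : a second topology on the carrier of X, making it a locally convex
     Hausdorff space; modelled by a locally convex TVS Xt together with a
     linear bijection e : X -> Xt (inverse f) identifying the carriers *)
  (Xt : tvsType R) (e : {linear X -> Xt}) (f : Xt -> X)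
  (ef : cancel e f) (fe : cancel f e) (Xt_hausdorff : hausdorff_space Xt)
  (* Rf : X -> (-oo, +oo], proper, convex, tau-compact sublevel sets *)
  (Rf : X -> \bar R)
  (Rf_noninf : forall x, Rf x != -oo%E)
  (Rf_proper : exists x, (Rf x < +oo)%E)
  (Rf_convex : econvex Rf)
  (Rf_sublevel : forall lam : R, compact (e @` [set x | (Rf x <= lam%:E)%E]))
  (* Y : real Hilbert space *)
  (Y : completeNormedModType R) (ip : Y -> Y -> R)
  (Y_hilbert : is_inner_product ip)
  (* A : linear, tau-to-weak continuous *)
  (A : {linear X -> Y})
  (A_weak : forall y : Y, continuous (fun z : Xt => ip (A (f z)) y))
  (g : Y) (xhat : R -> X)
  (xhat_sel : forall alpha, 0 < alpha -> Ralpha A Rf alpha g (xhat alpha)) :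
  let theta := vartheta A Rf g in
  [/\ (* value of theta at the selection *)
      forall alpha, 0 < alpha ->
        (theta alpha)%:E = ((2 * alpha)^-1 * `|g - A (xhat alpha)| ^+ 2)%:E
                            + Rf (xhat alpha),
      (* convex on (0, oo) *)
      forall a b t, 0 < a -> 0 < b -> 0 <= t <= 1 ->
        theta (t * a + (1 - t) * b) <= t * theta a + (1 - t) * theta b,
      (* non-increasing on (0, oo) *)
      forall a b, 0 < a -> a <= b -> theta b <= theta a,
      (* differentiable with the stated derivative *)
      forall alpha, 0 < alpha ->
        derivable theta alpha 1 /\
        derive1 theta alpha = - ((2 * alpha ^+ 2)^-1 * `|g - A (xhat alpha)| ^+ 2)
    & (* the derivative is continuous on (0, oo) *)
      forall alpha, 0 < alpha -> {for alpha, continuous (derive1 theta)}].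
Proof.
move=> theta; set P := @res_scaled _ _ _ A g xhat; set s := fun a => - (P a ^+ 2 / 2).
have support : forall a b, 0 < a -> 0 < b -> s a * (b - a) <= theta b - theta a
  := vartheta_support Y_hilbert Rf_noninf Rf_convex xhat_sel.
have s_cont a : 0 < a -> {for a, continuous s}.
  move=> a0; have Pa := res_scaled_continuous Y_hilbert Rf_noninf Rf_convex xhat_sel a a0.
  by apply: cvgN; apply: cvgMl; rewrite expr2; apply: cvgM.
split.
- by move=> a a0; exact (vartheta_minimizer Rf_noninf (xhat_sel a a0)).
- exact: support_convex support.
- apply: support_nonincreasing support _ => c _.
  by rewrite oppr_le0 divr_ge0 ?sqr_ge0.
- move=> a a0; have [D ->] := support_derive support a0 (s_cont a a0).
  by split=> //; rewrite /s /P /res_scaled; congr (- _); field; rewrite gt_eqF.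
- by move=> a a0; exact: support_derive_continuous support a a0 s_cont.
Qed.
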